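(* Let $\{K_t\}_{t\in(-\infty,T)}$ be a compact convex ancient solution of the planar affine normal flow shrinking to the origin as $t\to T$. Then the affine support function $\sigma(\theta,t)=s(\theta,t)\,\mathfrak{r}^{1/3}(\theta,t)$, viewed as a function of the normal angle $\theta$, satisfies $\partial_t\sigma\le 0$ for all $\theta$ and $t<T$.
   Context: Planar affine normal flow: smooth strictly convex bodies $K_t$ with boundaries evolving by $\partial_t X=-\kappa^{1/3}\nu$ ($\kappa$ curvature, $\nu$ outer unit normal); equivalently, up to tangential reparametrization, $\partial_t X=\mathfrak{n}$, where $\mathfrak{n}=\gamma_{\mathfrak{s}\mathfrak{s}}$ is the affine normal and $\mathfrak{s}$ the affine arc-length. Ancient: exists on $(-\infty,T)$, $T<\infty$. $s$ is the support function of $K_t$ (with respect to the origin, which is interior to all $K_t$) and $\mathfrak{r}=s_{\theta\theta}+s=1/\kappa$ is the radius of curvature, both as functions of the normal angle $\theta$. *)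

From Stdlib Require Import Reals Lra.
Open Scope R_scope.

Definition jcont_at (f : R -> R -> R) (x y : R) : Prop :=
  forall eps, 0 < eps -> exists del, 0 < del /\
    forall x' y', Rabs (x' - x) < del -> Rabs (y' - y) < del ->
      Rabs (f x' y' - f x y) < eps.

(* C^infinity on R x (-oo, T): f(theta, t) has all iterated partial
   derivatives D i j (i derivatives in theta, j in t), each jointly
   continuous on the open domain  { (theta,t) | t < T }. *)
Definition smooth_on (T : R) (f : R -> R -> R) : Prop :=
  exists D : nat -> nat -> R -> R -> R,
    (forall x y, y < T -> D O O x y = f x y) /\
    (forall i j x y, y < T ->
        derivable_pt_lim (fun u => D i j u y) x (D (S i) j x y)) /\
    (forall i j x y, y < T ->
        derivable_pt_lim (fun v => D i j x v) y (D i (S j) x y)) /\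
    (forall i j x y, y < T -> jcont_at (D i j) x y).

Definition affine_support (s r : R -> R -> R) (theta t : R) : R :=
  s theta t * Rpower (r theta t) (1/3).

From Stdlib Require Import Reals.
From Coquelicot Require Import Coquelicot.
From Stdlib Require Import Lra Psatz ZArith Classical_Prop.
Open Scope R_scope.

(* With [v = s_t = - r^(-1/3)] the affine support function is [sigma = - s / v], so
   [sigma_t = - (v^2 - s v_t) / v^2] and it suffices to show [v_t <= 0].  Differentiating the
   flow equation [v^3 (s_thth + s) = -1] in time gives [v_t = v^4 (v_thth + v) / 3], and
   differentiating once more shows, via the maximum principle on the circle, that a lower
   bound [v_t / v > psi(t)] is preserved when [psi' < 4 psi^2].  The barriers
   [psi(t) = -1/(4 (t - c)) - eps] can be started arbitrarily low at any earlier time because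
   the solution is ancient, and this forces [v_t / v >= 0]. *)

Lemma derivable_pt_lim_min_eq0 (g : R -> R) x l :
  (forall y, g x <= g y) -> derivable_pt_lim g x l -> l = 0.
Proof.
  intros Hmin Hd.
  rewrite <- (derive_pt_eq_0 g x l (exist _ l Hd) Hd).
  apply (deriv_minimum g (x - 1) (x + 1)); auto; lra.
Qed.

Lemma derivable_pt_lim2_min_nonneg (g g' : R -> R) x l :
  (forall y, g x <= g y) -> (forall y, derivable_pt_lim g y (g' y)) ->
  derivable_pt_lim g' x l -> 0 <= l.
Proof.
  intros Hmin Hd H. assert (H0 : g' x = 0) by exact (derivable_pt_lim_min_eq0 g x _ Hmin (Hd x)).
  destruct (Rle_lt_dec 0 l) as [|Hl]; auto. exfalso.
  destruct (H (-l) ltac:(lra)) as [del Hdel]. pose proof (cond_pos del).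
  (* g' < 0 just to the right of x, so g decreases there below its minimum *)
  assert (Hneg : forall h, 0 < h < del -> g' (x + h) < 0).
  { intros h Hh.
    assert (Hq : Rabs ((g' (x + h) - g' x) / h - l) < - l)
      by (apply Hdel; [lra | rewrite Rabs_pos_eq; lra]).
    rewrite H0 in Hq. apply Rabs_def2 in Hq.
    replace (g' (x + h)) with ((g' (x + h) - 0) / h * h) by (field; lra). nra. }
  destruct (MVT_cor2 g g' x (x + del/2)) as [c [Hc1 Hc2]]; [lra | intros; apply Hd |].
  assert (g' c < 0) by (replace c with (x + (c - x)) by ring; apply Hneg; lra).
  specialize (Hmin (x + del/2)). nra.
Qed.

Lemma derivable_pt_lim_nonpos_of_left_gt (g : R -> R) x a l :
  a < x -> (forall t, a < t < x -> g x < g t) -> derivable_pt_lim g x l -> l <= 0.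
Proof.
  intros Hax Hgt H. destruct (Rle_lt_dec l 0) as [|Hl]; auto. exfalso.
  destruct (H l Hl) as [del Hdel]. pose proof (cond_pos del).
  set (h := - Rmin (del/2) ((x - a)/2)).
  assert (Hm1 : Rmin (del/2) ((x - a)/2) <= del/2) by apply Rmin_l.
  assert (Hm2 : Rmin (del/2) ((x - a)/2) <= (x - a)/2) by apply Rmin_r.
  assert (Hp : 0 < Rmin (del/2) ((x - a)/2)) by (apply Rmin_pos; lra).
  assert (Hq : Rabs ((g (x + h) - g x) / h - l) < l).
  { apply Hdel; unfold h; [lra | rewrite Rabs_Ropp, Rabs_pos_eq; lra]. }
  assert (g x < g (x + h)) by (apply Hgt; unfold h; lra).
  assert (/ h < 0) by (apply Rinv_lt_0_compat; unfold h; lra).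
  apply Rabs_def2 in Hq. unfold Rdiv in Hq. nra.
Qed.

Lemma jcont_at_continuity_2d_pt f x y : jcont_at f x y -> continuity_2d_pt f x y.
Proof.
  intros H eps. destruct (H eps (cond_pos eps)) as [d [Hd H']].
  exists (mkposreal d Hd). intros u v Hu Hv. apply H'; auto.
Qed.

Lemma derivable_pt_lim2_unique (f g f' g' : R -> R) x l l' :
  (forall u, f u = g u) -> (forall u, derivable_pt_lim f u (f' u)) ->
  (forall u, derivable_pt_lim g u (g' u)) ->
  derivable_pt_lim f' x l -> derivable_pt_lim g' x l' -> l = l'.
Proof.
  intros Hfg Hf Hg Hf' Hg'. apply (uniqueness_limite f' x); auto.
  apply (derivable_pt_lim_ext g'); auto.
  intros u. apply (uniqueness_limite g u); auto.
  apply (derivable_pt_lim_ext f); auto.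
Qed.

Lemma derivable_pt_lim_eq_value f x l l' :
  derivable_pt_lim f x l -> l = l' -> derivable_pt_lim f x l'.
Proof. intros H <-; exact H. Qed.

Lemma derivable_pt_lim_ext_lt f g t T l : t < T ->
  (forall y, y < T -> f y = g y) -> derivable_pt_lim f t l -> derivable_pt_lim g t l.
Proof.
  intros Ht Heq. apply (derivable_pt_lim_locally_ext f g t (t - 1) T); [lra|].
  intros z Hz. apply Heq. lra.
Qed.

Section Periodic.

Variable g : R -> R.
Hypothesis g_periodic : forall x, g (x + 2 * PI) = g x.

Lemma periodic_shift_nat n x : g (x + 2 * PI * INR n) = g x.
Proof.
  induction n as [|n IH].
  - simpl. f_equal; ring.
  - rewrite S_INR, <- IH, <- (g_periodic (x + 2 * PI * INR n)). f_equal; ring.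
Qed.

Lemma periodic_shift_Z z x : g (x + 2 * PI * IZR z) = g x.
Proof.
  destruct z as [|p|p].
  - simpl. f_equal; ring.
  - rewrite <- (positive_nat_Z p), <- INR_IZR_INZ. apply periodic_shift_nat.
  - rewrite IZR_NEG, <- (positive_nat_Z p), <- INR_IZR_INZ.
    rewrite <- (periodic_shift_nat (Pos.to_nat p)). f_equal; ring.
Qed.

Lemma periodic_reduce x : exists y, 0 <= y <= 2 * PI /\ g x = g y.
Proof.
  pose proof PI_RGT_0.
  destruct (archimed (x / (2 * PI))) as [H1 H2].
  exists (x + 2 * PI * IZR (1 - up (x / (2 * PI)))). split.
  - rewrite minus_IZR.
    assert (Hx : x = x / (2 * PI) * (2 * PI)) by (field; lra). split; nra.
  - symmetry. apply periodic_shift_Z.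
Qed.

Lemma periodic_continuous_min :
  (forall x, 0 <= x <= 2 * PI -> continuity_pt g x) -> exists x0, forall y, g x0 <= g y.
Proof.
  intros Hc. pose proof PI_RGT_0.
  destruct (continuity_ab_min g 0 (2 * PI)) as [m [Hm _]]; [lra | auto |].
  exists m. intros y. destruct (periodic_reduce y) as [y' [Hy' ->]]. auto.
Qed.

End Periodic.

Lemma interval_glb_exists (P : R -> Prop) t0 t1 :
  t0 <= t1 -> P t1 -> exists ts, t0 <= ts <= t1 /\
    (forall t, t0 <= t <= t1 -> P t -> ts <= t) /\
    (forall b, (forall t, t0 <= t <= t1 -> P t -> b <= t) -> b <= ts).
Proof.
  intros H01 HP1.
  set (E := fun y => t0 <= - y <= t1 /\ P (- y)).
  destruct (completeness E) as [M [HM1 HM2]].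
  - exists (- t0). intros y [Hy _]. lra.
  - exists (- t1). split; rewrite Ropp_involutive; auto; lra.
  - assert (Hlow : forall t, t0 <= t <= t1 -> P t -> - M <= t).
    { intros t Ht HPt. assert (E (- t)) by (split; rewrite Ropp_involutive; auto).
      specialize (HM1 _ H). lra. }
    assert (Hgreat : forall b, (forall t, t0 <= t <= t1 -> P t -> b <= t) -> b <= - M).
    { intros b Hb. enough (M <= - b) by lra.
      apply HM2. intros y [Hy1 Hy2]. specialize (Hb _ Hy1 Hy2). lra. }
    exists (- M). repeat split; auto.
    + apply Hgreat. intros t Ht _. lra.
    + apply Hlow; auto; lra.
Qed.

Section MaximumPrinciple.

Variables (F Fth Fthth Ft : R -> R -> R) (t0 t1 : R).

Hypothesis t0_lt_t1 : t0 < t1.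
Hypothesis F_periodic : forall x t, t0 <= t <= t1 -> F (x + 2 * PI) t = F x t.
Hypothesis F_continuous : forall x t, t0 <= t <= t1 -> continuity_2d_pt F x t.
Hypothesis F_dth : forall x t, t0 <= t <= t1 -> derivable_pt_lim (fun y => F y t) x (Fth x t).
Hypothesis Fth_dth : forall x t, t0 <= t <= t1 -> derivable_pt_lim (fun y => Fth y t) x (Fthth x t).
Hypothesis F_dt : forall x t, t0 <= t <= t1 -> derivable_pt_lim (fun y => F x y) t (Ft x t).
Hypothesis F_contact : forall x t, t0 < t <= t1 -> F x t = 0 -> 0 <= Fthth x t -> 0 < Ft x t.
Hypothesis F_init : forall x, 0 < F x t0.

Lemma first_touch_nonneg ts : t0 <= ts <= t1 ->
  (forall x t, t0 <= t < ts -> 0 < F x t) -> forall x, 0 <= F x ts.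
Proof.
  intros Hts Hbefore x. destruct (Req_dec ts t0) as [->|Hne]; [left; auto|].
  destruct (Rle_lt_dec 0 (F x ts)) as [|Hneg]; auto. exfalso.
  assert (Hfp : 0 < - F x ts) by lra.
  destruct (F_continuous x ts Hts (mkposreal _ Hfp)) as [del Hdel]. pose proof (cond_pos del).
  set (h := Rmin del (ts - t0) / 2).
  assert (Hm1 : Rmin del (ts - t0) <= del) by apply Rmin_l.
  assert (Hm2 : Rmin del (ts - t0) <= ts - t0) by apply Rmin_r.
  assert (Hm : 0 < Rmin del (ts - t0)) by (apply Rmin_pos; lra).
  assert (Hnear : Rabs (F x (ts - h) - F x ts) < - F x ts).
  { apply Hdel; [rewrite Rminus_diag, Rabs_R0; lra|].
    unfold h. rewrite Rabs_left; lra. }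
  apply Rabs_def2 in Hnear. assert (0 < F x (ts - h)) by (apply Hbefore; unfold h; lra). lra.
Qed.

Lemma first_touch_attained ts : t0 <= ts <= t1 ->
  (forall x t, t0 <= t < ts -> 0 < F x t) ->
  (forall b, (forall t, t0 <= t <= t1 -> (exists x, F x t <= 0) -> b <= t) -> b <= ts) ->
  exists xs, F xs ts <= 0.
Proof.
  intros Hts Hbefore Hgreat. apply NNPP. intros Hno.
  assert (Hpos : forall x, 0 < F x ts).
  { intros x. apply Rnot_le_lt. intros Hle. apply Hno. exists x; auto. }
  destruct (periodic_continuous_min (fun y => F y ts)) as [xm Hxm].
  { intros y. apply F_periodic; lra. }
  { intros y _. apply derivable_continuous_pt. exists (Fth y ts). apply F_dth; lra. }
  (* a positive minimum at time ts persists, by uniform continuity, for a short time *)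
  destruct (uniform_continuity_2d F 0 (2 * PI) t0 t1 (fun x t _ => F_continuous x t)
             (mkposreal _ (Hpos xm))) as [del Hdel].
  assert (Hnear : forall t, ts <= t < ts + del -> t <= t1 -> forall x, 0 < F x t).
  { intros t Ht Ht1 x. pose proof (cond_pos del).
    destruct (periodic_reduce (fun y => F y t)) with (x := x) as [y [Hy ->]].
    { intros z. apply F_periodic; lra. }
    assert (Hu : Rabs (F y t - F y ts) < F xm ts).
    { apply Hdel; try lra; [rewrite Rminus_diag, Rabs_R0 | rewrite Rabs_pos_eq]; lra. }
    apply Rabs_def2 in Hu. specialize (Hxm y). simpl in Hxm. lra. }
  assert (ts + del <= ts).
  { apply Hgreat. intros t Ht [x Hx].
    destruct (Rlt_le_dec t ts) as [Hlt|Hge]; [specialize (Hbefore x t ltac:(lra)); lra|].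
    destruct (Rlt_le_dec t (ts + del)) as [Hlt|]; auto.
    specialize (Hnear t (conj Hge Hlt) ltac:(lra) x). lra. }
  pose proof (cond_pos del). lra.
Qed.

Lemma periodic_max_principle x : 0 < F x t1.
Proof.
  apply Rnot_le_lt. intros Hx1.
  destruct (interval_glb_exists (fun t => exists x, F x t <= 0) t0 t1)
    as [ts [Hts [Hlow Hgreat]]]; [lra | exists x; auto |].
  assert (Hbefore : forall x t, t0 <= t < ts -> 0 < F x t).
  { intros y t Ht. apply Rnot_le_lt. intros Hle.
    assert (ts <= t) by (apply Hlow; [lra | exists y; auto]). lra. }
  pose proof (first_touch_nonneg ts Hts Hbefore) as Hnonneg.
  destruct (first_touch_attained ts Hts Hbefore Hgreat) as [xs Hxs].
  assert (Hzero : F xs ts = 0) by (specialize (Hnonneg xs); lra).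
  assert (Hts0 : t0 < ts).
  { destruct (Req_dec ts t0) as [Heq|]; [|lra]. rewrite Heq in Hzero. specialize (F_init xs). lra. }
  assert (Hthth : 0 <= Fthth xs ts).
  { apply (derivable_pt_lim2_min_nonneg (fun y => F y ts) (fun y => Fth y ts) xs).
    - intros y. rewrite Hzero. apply Hnonneg.
    - intros y. apply F_dth; lra.
    - apply Fth_dth; lra. }
  assert (Ft xs ts <= 0).
  { apply (derivable_pt_lim_nonpos_of_left_gt (fun y => F xs y) ts t0 _ Hts0).
    - intros t Ht. rewrite Hzero. apply Hbefore; lra.
    - exact (F_dt xs ts Hts). }
  assert (0 < Ft xs ts) by (apply F_contact; auto; lra). lra.
Qed.

End MaximumPrinciple.

(* [- / (4 (t - c))] solves [psi' = 4 psi^2] on [(c, +oo)]; subtracting [eps > 0] makes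
   [psi' < 4 psi^2] strict. *)
Definition riccati_barrier (c eps t : R) : R := - / (4 * (t - c)) - eps.

Lemma riccati_barrier_derive c eps t : c < t ->
  derivable_pt_lim (riccati_barrier c eps) t (4 * (/ (4 * (t - c))) ^ 2).
Proof.
  intros Ht. unfold riccati_barrier. apply is_derive_Reals. auto_derive; [lra|]. field. lra.
Qed.

Section AncientAffineFlow.

Variables (T : R) (D : nat -> nat -> R -> R -> R).

Hypothesis D_dth : forall i j x t, t < T ->
  derivable_pt_lim (fun u => D i j u t) x (D (S i) j x t).
Hypothesis D_dt : forall i j x t, t < T ->
  derivable_pt_lim (fun u => D i j x u) t (D i (S j) x t).
Hypothesis D_cont : forall i j x t, t < T -> jcont_at (D i j) x t.
Hypothesis D_periodic : forall x t, t < T -> D 0 0 (x + 2 * PI) t = D 0 0 x t.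
(* [D 0 0 = s], [D 0 1 = s_t] and [D 2 0 + D 0 0 = r]: this is the flow equation [s_t^3 r = -1]. *)
Hypothesis speed_cube : forall x t, t < T -> D 0 1 x t ^ 3 * (D 2 0 x t + D 0 0 x t) = -1.
Hypothesis speed_neg : forall x t, t < T -> D 0 1 x t < 0.

Ltac derive_in_t :=
  eapply derivable_pt_lim_eq_value;
  [repeat first [ apply derivable_pt_lim_mult | apply derivable_pt_lim_plus
                | apply derivable_pt_lim_const | apply D_dt; assumption ]
  | cbv beta; field].

Lemma D_periodic_dt j x t : t < T -> D 0 j (x + 2 * PI) t = D 0 j x t.
Proof.
  revert x t. induction j as [|j IH]; intros x t Ht; [auto|].
  apply (uniqueness_limite (fun u => D 0 j x u) t); [|apply D_dt; auto].
  apply (derivable_pt_lim_ext_lt (fun u => D 0 j (x + 2 * PI) u) _ t T); auto.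
Qed.

Lemma speed_evolution x t : t < T ->
  D 0 2 x t = / 3 * D 0 1 x t ^ 4 * (D 2 1 x t + D 0 1 x t).
Proof.
  intros Ht.
  set (g := fun y => D 0 1 x y * D 0 1 x y * D 0 1 x y * (D 2 0 x y + D 0 0 x y)).
  assert (Hd : derivable_pt_lim g t
      (3 * D 0 1 x t ^ 2 * D 0 2 x t * (D 2 0 x t + D 0 0 x t)
       + D 0 1 x t ^ 3 * (D 2 1 x t + D 0 1 x t))) by (unfold g; derive_in_t).
  assert (Hd0 : derivable_pt_lim g t 0).
  { apply (derivable_pt_lim_ext_lt (fun _ => -1) _ t T _ Ht); [|apply derivable_pt_lim_const].
    intros y Hy. unfold g. rewrite <- (speed_cube x y Hy). ring. }
  pose proof (uniqueness_limite _ _ _ _ Hd Hd0) as E.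
  assert (H3 : 3 * D 0 2 x t * (D 0 1 x t ^ 3 * (D 2 0 x t + D 0 0 x t))
               + D 0 1 x t ^ 4 * (D 2 1 x t + D 0 1 x t) = 0)
    by (rewrite <- (Rmult_0_r (D 0 1 x t)), <- E; ring).
  rewrite speed_cube in H3 by auto. lra.
Qed.

Lemma accel_evolution x t : t < T ->
  D 0 3 x t = 4 / 3 * D 0 1 x t ^ 3 * D 0 2 x t * (D 2 1 x t + D 0 1 x t)
              + / 3 * D 0 1 x t ^ 4 * (D 2 2 x t + D 0 2 x t).
Proof.
  intros Ht. apply (uniqueness_limite (fun y => D 0 2 x y) t); [apply D_dt; auto|].
  apply (derivable_pt_lim_ext_lt
           (fun y => / 3 * (D 0 1 x y * D 0 1 x y * D 0 1 x y * D 0 1 x y)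
                     * (D 2 1 x y + D 0 1 x y))
           _ t T _ Ht).
  - intros y Hy. rewrite (speed_evolution x y Hy). ring.
  - derive_in_t.
Qed.

(* The hypotheses are the contact conditions [F = 0], [F_thth >= 0] for [F = p D 0 1 - D 0 2]. *)
Lemma contact_accel_pos x t p p' : t < T -> p' < 4 * p ^ 2 ->
  D 0 2 x t = p * D 0 1 x t -> 0 <= p * D 2 1 x t - D 2 2 x t ->
  0 < p' * D 0 1 x t + p * D 0 2 x t - D 0 3 x t.
Proof.
  intros Ht Hp' HP HPthth.
  pose proof (speed_evolution x t Ht) as E1. pose proof (accel_evolution x t Ht) as E2.
  pose proof (speed_neg x t Ht) as Hv.
  set (v := D 0 1 x t) in *. set (vthth := D 2 1 x t) in *.
  set (P := D 0 2 x t) in *. set (Pthth := D 2 2 x t) in *.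
  assert (Hw : v ^ 3 * (vthth + v) = 3 * p).
  { apply (Rmult_eq_reg_l v); [|lra]. rewrite HP in E1.
    replace (v * (v ^ 3 * (vthth + v))) with (3 * (/ 3 * v ^ 4 * (vthth + v))) by field.
    rewrite <- E1. ring. }
  assert (HP3 : D 0 3 x t <= 5 * p ^ 2 * v).
  { rewrite E2, HP.
    replace (4 / 3 * v ^ 3 * (p * v) * (vthth + v)) with (4 / 3 * p * v * (v ^ 3 * (vthth + v)))
      by ring.
    assert (v ^ 4 * Pthth <= v ^ 4 * (p * vthth)) by (apply Rmult_le_compat_l; nra).
    replace (/ 3 * v ^ 4 * (Pthth + p * v)) with (/ 3 * (v ^ 4 * Pthth) + / 3 * p * v ^ 5) by ring.
    assert (v ^ 4 * (p * vthth) = p * v * (v ^ 3 * (vthth + v)) - p * v ^ 5) by ring.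
    rewrite Hw in *. nra. }
  rewrite HP. nra.
Qed.

Lemma speed_quotient_barrier t0 t1 c eps : c < t0 < t1 -> t1 < T -> 0 < eps ->
  (forall x, riccati_barrier c eps t0 < D 0 2 x t0 / D 0 1 x t0) ->
  forall x, riccati_barrier c eps t1 < D 0 2 x t1 / D 0 1 x t1.
Proof.
  intros Hc Ht1 Heps Hinit.
  set (psi := riccati_barrier c eps).
  assert (Hquot : forall x t, t < T ->
            psi t < D 0 2 x t / D 0 1 x t <-> 0 < psi t * D 0 1 x t - D 0 2 x t).
  { intros x t Ht. pose proof (speed_neg x t Ht).
    replace (D 0 2 x t) with (D 0 2 x t / D 0 1 x t * D 0 1 x t) at 2 by (field; lra).
    split; intros; nra. }
  intros x. apply Hquot; [lra|]. revert x.
  apply (periodic_max_principle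
           (fun x y => psi y * D 0 1 x y - D 0 2 x y)
           (fun x y => psi y * D 1 1 x y - D 1 2 x y)
           (fun x y => psi y * D 2 1 x y - D 2 2 x y)
           (fun x y => 4 * (/ (4 * (y - c))) ^ 2 * D 0 1 x y + psi y * D 0 2 x y - D 0 3 x y)
           t0 t1); try lra.
  - intros x t Ht. rewrite !D_periodic_dt by lra. reflexivity.
  - intros x t Ht. apply continuity_2d_pt_minus; [apply continuity_2d_pt_mult|];
      try (apply jcont_at_continuity_2d_pt, D_cont; lra).
    apply (continuity_1d_2d_pt_comp psi (fun _ y => y)); [|apply continuity_2d_pt_id2].
    apply derivable_continuous_pt. eexists. apply riccati_barrier_derive. lra.
  - intros x t Ht. eapply derivable_pt_lim_eq_value.
    + apply derivable_pt_lim_minus; [apply derivable_pt_lim_mult; [apply derivable_pt_lim_const|]|];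
        apply D_dth; lra.
    + cbv beta; ring.
  - intros x t Ht. eapply derivable_pt_lim_eq_value.
    + apply derivable_pt_lim_minus; [apply derivable_pt_lim_mult; [apply derivable_pt_lim_const|]|];
        apply D_dth; lra.
    + cbv beta; ring.
  - intros x t Ht. eapply derivable_pt_lim_eq_value.
    + apply derivable_pt_lim_minus; [apply derivable_pt_lim_mult; [apply riccati_barrier_derive|]|];
        try apply D_dt; lra.
    + cbv beta; ring.
  - intros x t Ht HF Hthth. apply contact_accel_pos; [lra | | lra | exact Hthth].
    assert (0 < / (4 * (t - c))) by (apply Rinv_0_lt_compat; lra).
    unfold psi, riccati_barrier. nra.
  - intros x. apply Hquot; [lra | apply Hinit].
Qed.

(* If [D 0 2 > 0] at [t1], then [q = D 0 2 / D 0 1 < 0] there; a barrier started below the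
   quotient at the earlier time [t1 + / q], which exists since the flow is ancient, is still
   above [q] at [t1]. *)
Lemma speed_dt_nonpos x1 t1 : t1 < T -> D 0 2 x1 t1 <= 0.
Proof.
  intros Ht1. apply Rnot_lt_le. intros HP1. pose proof (speed_neg x1 t1 Ht1).
  set (q := D 0 2 x1 t1 / D 0 1 x1 t1).
  assert (Hq : q < 0).
  { assert (/ D 0 1 x1 t1 < 0) by (apply Rinv_lt_0_compat; lra). unfold q, Rdiv. nra. }
  assert (Hiq : / q < 0) by (apply Rinv_lt_0_compat; lra).
  set (t0 := t1 + / q). assert (Ht0 : t0 < T) by (unfold t0; lra).
  destruct (periodic_continuous_min (fun y => D 0 2 y t0 / D 0 1 y t0)) as [xm Hxm].
  { intros y. cbv beta. rewrite !D_periodic_dt by auto. reflexivity. }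
  { intros y _. pose proof (speed_neg y t0 Ht0). apply derivable_continuous_pt. eexists.
    apply derivable_pt_lim_div; try apply D_dth; auto; lra. }
  set (b := Rmax 1 (- (D 0 2 xm t0 / D 0 1 xm t0))).
  assert (Hb1 : 1 <= b) by apply Rmax_l.
  assert (Hb2 : - (D 0 2 xm t0 / D 0 1 xm t0) <= b) by apply Rmax_r.
  assert (Hib : 0 < / (4 * b)) by (apply Rinv_0_lt_compat; lra).
  set (c := t0 - / (4 * b)).
  assert (Hbarrier := speed_quotient_barrier t0 t1 c (- q / 2)).
  specialize (Hbarrier ltac:(unfold c, t0 in *; lra) Ht1 ltac:(lra)).
  assert (Hinit : forall x, riccati_barrier c (- q / 2) t0 < D 0 2 x t0 / D 0 1 x t0).
  { intros x. specialize (Hxm x). cbv beta in Hxm. unfold riccati_barrier.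
    replace (/ (4 * (t0 - c))) with b by (unfold c; field; lra). lra. }
  specialize (Hbarrier Hinit x1). fold q in Hbarrier. unfold riccati_barrier in Hbarrier.
  assert (Hle : / (4 * (t1 - c)) <= / (4 * - / q)).
  { apply Rinv_le_contravar; [lra|]. unfold c, t0. lra. }
  replace (/ (4 * - / q)) with (- q / 4) in Hle by (field; lra). lra.
Qed.

Lemma neg_support_over_speed_dt_nonpos x t : t < T -> 0 < D 0 0 x t ->
  exists l, derivable_pt_lim (fun y => - (D 0 0 x y / D 0 1 x y)) t l /\ l <= 0.
Proof.
  intros Ht Hs. pose proof (speed_neg x t Ht). pose proof (speed_dt_nonpos x t Ht).
  eexists. split.
  - apply derivable_pt_lim_opp, derivable_pt_lim_div; try apply D_dt; auto; lra.
  - apply Ropp_le_cancel. rewrite Ropp_involutive, Ropp_0.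
    apply Rdiv_le_0_compat; unfold Rsqr; nra.
Qed.

End AncientAffineFlow.

Lemma Rpower_third_cube x : 0 < x -> Rpower x (1 / 3) ^ 3 = x.
Proof.
  intros Hx. rewrite <- Rpower_pow by (unfold Rpower; apply exp_pos).
  rewrite Rpower_mult. replace (1 / 3 * INR 3) with 1 by (simpl; field). apply Rpower_1, Hx.
Qed.

Theorem mainTheorem2
  (T : R) (s ds r : R -> R -> R)
  (Hsmooth : smooth_on T s)
  (Hper : forall theta t, t < T -> s (theta + 2 * PI) t = s theta t)
  (Hds : forall theta t, t < T -> derivable_pt_lim (fun u => s u t) theta (ds theta t))
  (Hr : forall theta t, t < T ->
          derivable_pt_lim (fun u => ds u t) theta (r theta t - s theta t))
  (Hrpos : forall theta t, t < T -> 0 < r theta t)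
  (Hspos : forall theta t, t < T -> 0 < s theta t)
  (Hflow : forall theta t, t < T ->
          derivable_pt_lim (fun v => s theta v) t (- Rpower (r theta t) (-(1/3))))
  (Hshrink : forall eps, 0 < eps -> exists del, 0 < del /\
          forall t theta, T - del < t -> t < T -> Rabs (s theta t) < eps) :
  forall theta t, t < T ->
    exists l, derivable_pt_lim (fun v => affine_support s r theta v) t l /\ l <= 0.
Proof.
  destruct Hsmooth as [D [HD0 [HDth [HDt HDc]]]].
  assert (Hr_eq : forall x t, t < T -> r x t = D 2%nat 0%nat x t + D 0%nat 0%nat x t).
  { intros x t Ht. rewrite HD0 by auto.
    enough (D 2%nat 0%nat x t = r x t - s x t) by lra.
    apply (derivable_pt_lim2_unique (fun u => D 0%nat 0%nat u t) (fun u => s u t)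
             (fun u => D 1%nat 0%nat u t) (fun u => ds u t) x); auto. }
  assert (Hspeed : forall x t, t < T -> D 0%nat 1%nat x t = - / Rpower (r x t) (1 / 3)).
  { intros x t Ht. rewrite <- Rpower_Ropp. apply (uniqueness_limite (fun v => s x v) t); auto.
    apply (derivable_pt_lim_ext_lt (fun v => D 0%nat 0%nat x v) _ t T); auto. }
  assert (Hroot_pos : forall x t, 0 < Rpower (r x t) (1 / 3)) by (intros; apply exp_pos).
  intros theta t Ht.
  destruct (neg_support_over_speed_dt_nonpos T D HDth HDt HDc) with (x := theta) (t := t)
    as [l [Hl Hl0]]; auto.
  - intros x u Hu. rewrite !HD0 by auto. auto.
  - intros x u Hu. rewrite Hspeed, <- Hr_eq by auto.
    pose proof (Rpower_third_cube _ (Hrpos x u Hu)) as Ha3. pose proof (Hroot_pos x u).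
    set (a := Rpower (r x u) (1 / 3)) in *. rewrite <- Ha3. field. lra.
  - intros x u Hu. rewrite Hspeed by auto.
    pose proof (Rinv_0_lt_compat _ (Hroot_pos x u)). lra.
  - rewrite HD0; auto.
  - exists l. split; auto. refine (derivable_pt_lim_ext_lt _ _ t T _ Ht _ Hl).
    intros y Hy. unfold affine_support. rewrite Hspeed, HD0 by auto.
    field. apply Rgt_not_eq, Hroot_pos.
Qed.
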